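(* Let $H$ be a separable complex Hilbert space and let $\mathcal{U}$ be a unitary system on $H$. If $\psi_1,\psi_2\in\mathcal{W}(\mathcal{U})$, then $\psi_1+\lambda\psi_2\in\mathcal{RW}(\mathcal{U})$ for every complex scalar $\lambda$ with $|\lambda|\neq 1$. More generally, if $\psi_1,\psi_2\in\mathcal{RW}(\mathcal{U})$, then there are constants $b>a>0$ such that $\psi_1+\lambda\psi_2\in\mathcal{RW}(\mathcal{U})$ for all $\lambda\in\mathbb{C}$ with either $|\lambda|<a$ or $|\lambda|>b$.
   Context: A unitary system on $H$ is a collection $\mathcal{U}$ of unitary operators on $H$ containing the identity operator. A vector $\psi\in H$ is a complete wandering vector for $\mathcal{U}$ if $\{U\psi: U\in\mathcal{U}\}$ is an orthonormal set whose closed linear span is $H$; $\mathcal{W}(\mathcal{U})$ denotes the set of complete wandering vectors. A Riesz basis of a Hilbert space is the image of an orthonormal basis under a bounded invertible operator. A vector $\psi$ is a complete Riesz vector for $\mathcal{U}$ if $\{U\psi:U\in\mathcal{U}\}$ is a Riesz basis for its closed linear span and this closed linear span is $H$; $\mathcal{RW}(\mathcal{U})$ denotes the set of complete Riesz vectors. *)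

From HB Require Import structures.
From mathcomp Require Import all_boot all_order all_algebra.
From mathcomp Require Import boolp classical_sets reals.
From mathcomp Require Export complex.

Set Implicit Arguments.
Unset Strict Implicit.
Unset Printing Implicit Defensive.

Import Order.TTheory GRing.Theory Num.Theory.
Local Open Scope ring_scope.

Section HilbertDefs.
Variable R : realType.
Local Notation C := R[i].
Variable H : lmodType C.
Variable ip : H -> H -> C.   (* inner product, linear in the first argument *)

Record inner_product : Prop := InnerProduct {
  ip_addl : forall x y z, ip (x + y) z = ip x z + ip y z;
  ip_scalel : forall (a : C) x y, ip (a *: x) y = a * ip x y;
  ip_conj : forall x y, ip y x = conjc (ip x y);
  ip_ge0 : forall x, 0 <= ip x x;
  ip_eq0 : forall x, ip x x = 0 -> x = 0 }.

Definition hnorm (x : H) : R := Num.sqrt (complex.Re (ip x x)).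

Definition cauchy_seq (u : nat -> H) : Prop :=
  forall eps : R, 0 < eps -> exists N : nat,
    forall m n, (N <= m)%N -> (N <= n)%N -> hnorm (u m - u n) < eps.

Definition converges_to (u : nat -> H) (l : H) : Prop :=
  forall eps : R, 0 < eps -> exists N : nat,
    forall n, (N <= n)%N -> hnorm (u n - l) < eps.

Definition hilbert_space : Prop :=
  inner_product /\ forall u, cauchy_seq u -> exists l, converges_to u l.

Definition separable : Prop :=
  exists d : nat -> H, forall (x : H) (eps : R), 0 < eps ->
    exists n, hnorm (x - d n) < eps.

Definition linear_op (T : H -> H) : Prop :=
  forall (a : C) x y, T (a *: x + y) = a *: T x + T y.

Definition bounded_op (T : H -> H) : Prop :=
  exists M : R, forall x, hnorm (T x) <= M * hnorm x.

Definition bounded_invertible (T : H -> H) : Prop :=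
  linear_op T /\ bounded_op T /\
  exists S : H -> H, linear_op S /\ bounded_op S /\ cancel T S /\ cancel S T.

Definition unitary (U : H -> H) : Prop :=
  linear_op U /\ (forall x y, ip (U x) (U y) = ip x y) /\
  (forall y, exists x, U x = y).

Definition unitary_system (US : set (H -> H)) : Prop :=
  (forall U, US U -> unitary U) /\ US id.

Definition orthonormal (I : Type) (f : I -> H) : Prop :=
  forall i j, ip (f i) (f j) = (if asbool (i = j) then 1 else 0).

Definition in_span (I : Type) (f : I -> H) (x : H) : Prop :=
  exists s : seq (C * I), x = \sum_(p <- s) p.1 *: f p.2.

(* the closed linear span of f is all of H *)
Definition complete_family (I : Type) (f : I -> H) : Prop :=
  forall (x : H) (eps : R), 0 < eps ->
    exists y, in_span f y /\ hnorm (x - y) < eps.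

Definition orthonormal_basis (I : Type) (f : I -> H) : Prop :=
  orthonormal f /\ complete_family f.

Definition riesz_basis (I : Type) (f : I -> H) : Prop :=
  exists e : I -> H, orthonormal_basis e /\
    exists T : H -> H, bounded_invertible T /\ forall i, T (e i) = f i.

Definition uorbit (US : set (H -> H)) (psi : H) : {U : H -> H | US U} -> H :=
  fun u => proj1_sig u psi.

Definition wandering (US : set (H -> H)) (psi : H) : Prop :=
  orthonormal (@uorbit US psi) /\ complete_family (@uorbit US psi).

(* complete Riesz vectors RW(US): the uorbit is a Riesz basis of its closed
   linear span, and that closed linear span is H *)
Definition riesz_vector (US : set (H -> H)) (psi : H) : Prop :=
  complete_family (@uorbit US psi) /\ riesz_basis (@uorbit US psi).

End HilbertDefs.

From Pilot Require Import Defs.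
From HB Require Import structures.
From mathcomp Require Import all_boot all_order all_algebra.
From mathcomp Require Import boolp classical_sets reals complex.
From mathcomp Require Import ring lra.
Import Order.TTheory GRing.Theory Num.Theory.
Local Open Scope ring_scope.
Local Open Scope complex_scope.
Set Implicit Arguments.
Unset Strict Implicit.
Unset Printing Implicit Defensive.

(* If the orbit of psi1 is T e for an orthonormal basis e and a bounded invertible T,
   and the orbit of psi2 is A e for a bounded A, then the orbit of psi1 + lam psi2 is
   T (1 + lam T^-1 A) e, and 1 + lam T^-1 A is inverted by the Neumann series as soon
   as |lam| |T^-1| |A| < 1.  Such an A exists because two orthonormal bases indexed by
   the same set differ by an isometry (defined on finite combinations and extended by
   completeness); for wandering vectors T = 1 and |A| = 1, whence |lam| < 1 suffices.
   Large |lam| reduce to small ones since psi1 + lam psi2 = lam (psi2 + lam^-1 psi1)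
   and nonzero multiples of complete Riesz vectors are complete Riesz vectors. *)

Section ComplexModulus.
Variable R : realType.
Implicit Types z : R[i].

Lemma normc_ge0 z : 0 <= Normc.normc z.
Proof. by case: z => a b /=; rewrite sqrtr_ge0. Qed.

Lemma normc_gt0 z : (0 < Normc.normc z) = (z != 0).
Proof.
rewrite lt_def normc_ge0 andbT; apply/idP/idP; apply: contra => /eqP.
  by move=> ->; rewrite Normc.normc0.
by move/Normc.eq0_normc ->.
Qed.

Lemma mulcJ_normc z : z * conjc z = (Normc.normc z ^+ 2)%:C.
Proof.
case: z => a b /=; rewrite sqr_sqrtr ?addr_ge0 ?sqr_ge0 //.
by simpc; rewrite !expr2 mulrC [b * a]mulrC addNr.
Qed.

Lemma Re_le_normc z : complex.Re z <= Normc.normc z.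
Proof.
case: z => a b /=; apply: le_trans (ler_norm a) _.
by rewrite -sqrtr_sqr ler_sqrt ?addr_ge0 ?sqr_ge0 // lerDl sqr_ge0.
Qed.

End ComplexModulus.

Section NullSequences.
Variable R : realType.

Definition null_seq (r : nat -> R) := forall eps : R, 0 < eps ->
  exists N : nat, forall n, (N <= n)%N -> r n < eps.

Lemma null_seqD r1 r2 : null_seq r1 -> null_seq r2 -> null_seq (fun n => r1 n + r2 n).
Proof.
move=> h1 h2 e e_gt0; have e2_gt0 : 0 < e / 2 by rewrite divr_gt0.
have [N1 H1] := h1 _ e2_gt0; have [N2 H2] := h2 _ e2_gt0.
exists (maxn N1 N2) => n; rewrite geq_max => /andP[n1 n2].
by rewrite [e]splitr ltrD ?H1 ?H2.
Qed.

Lemma null_seqZ c r : 0 <= c -> null_seq r -> null_seq (fun n => c * r n).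
Proof.
move=> c_ge0 h e e_gt0; have c1_gt0 : 0 < c + 1 by rewrite ltr_wpDl.
have [N HN] := h (e / (c + 1)) (divr_gt0 e_gt0 c1_gt0).
exists N => n /HN hn; apply: le_lt_trans (ler_wpM2l c_ge0 (ltW hn)) _.
rewrite mulrA ltr_pdivrMr //; nra.
Qed.

Lemma null_seq_le r r' : (forall n, r n <= r' n) -> null_seq r' -> null_seq r.
Proof. by move=> h h' e /h' [N HN]; exists N => n /HN; apply: le_lt_trans. Qed.

Lemma null_seq_invS : null_seq (fun n => n.+1%:R^-1).
Proof.
move=> e e_gt0; have einv_ge0 : 0 <= e^-1 by rewrite invr_ge0 ltW.
exists (Num.Def.archi_bound e^-1) => n hn.
have lt_n : e^-1 < n.+1%:R.
  by apply: lt_le_trans (archi_boundP einv_ge0) _; rewrite ler_nat leqW.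
by rewrite -(invrK e) ltf_pV2 ?posrE ?invr_gt0 ?ltr0Sn.
Qed.

Section Geometric.
Variable q : R.
Hypotheses (q_ge0 : 0 <= q) (q_lt1 : q < 1).

Lemma expr_mulSn_subr_le1 n : q ^+ n * (n.+1%:R * (1 - q)) <= 1.
Proof.
elim: n => [|n IH]; first by rewrite expr0 !mul1r lerBlDr lerDl.
have qn_ge0 : 0 <= q ^+ n by rewrite exprn_ge0.
have qn_le1 : q ^+ n <= 1 by rewrite exprn_ile1 // ltW.
rewrite exprS -[n.+2]addn1 natrD.
set m := n.+1%:R in IH *; set P := q ^+ n in IH qn_ge0 qn_le1 *.
have h1 : 0 <= q * (1 - P * (m * (1 - q))) by rewrite mulr_ge0 // subr_ge0.
have h2 : 0 <= (1 - q) * (1 - q * P).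
  rewrite mulr_ge0 // subr_ge0 ?ltW //.
  by apply: le_lt_trans (ler_wpM2l q_ge0 qn_le1) _; rewrite mulr1.
nra.
Qed.

Lemma null_seq_expr : null_seq (fun n => q ^+ n).
Proof.
have q1_gt0 : 0 < 1 - q by rewrite subr_gt0.
apply: (@null_seq_le _ (fun n => (1 - q)^-1 * n.+1%:R^-1)); last first.
  by apply: null_seqZ; [rewrite invr_ge0 ltW | exact: null_seq_invS].
move=> n; rewrite -invfM -[X in _ <= X]mul1r ler_pdivlMr ?mulr_gt0 //.
by rewrite [_ * n.+1%:R]mulrC expr_mulSn_subr_le1.
Qed.

End Geometric.
End NullSequences.

Section InnerProductSpace.
Variable R : realType.
Local Notation C := R[i].
Variable H : lmodType C.
Variable ip : H -> H -> C.
Hypothesis hip : inner_product ip.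
Local Notation hnorm := (hnorm ip).
Local Notation converges_to := (converges_to ip).
Local Notation cauchy_seq := (cauchy_seq ip).
Implicit Types (T A D : H -> H) (u v : nat -> H).

Lemma ipDl x y z : ip (x + y) z = ip x z + ip y z.
Proof. exact: (ip_addl hip). Qed.

Lemma ipZl a x y : ip (a *: x) y = a * ip x y.
Proof. exact: (ip_scalel hip). Qed.

Lemma ip0l y : ip 0 y = 0.
Proof. by rewrite -(scale0r 0) ipZl mul0r. Qed.

Lemma ipNl x y : ip (- x) y = - ip x y.
Proof. by rewrite -scaleN1r ipZl mulN1r. Qed.

Lemma ipBl x y z : ip (x - y) z = ip x z - ip y z.
Proof. by rewrite ipDl ipNl. Qed.

Lemma ipDr x y z : ip x (y + z) = ip x y + ip x z.
Proof. by rewrite (ip_conj hip) ipDl rmorphD /= -!(ip_conj hip). Qed.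

Lemma ipZr a x y : ip x (a *: y) = conjc a * ip x y.
Proof. by rewrite (ip_conj hip) ipZl rmorphM /= -!(ip_conj hip). Qed.

Lemma ip0r y : ip y 0 = 0.
Proof. by rewrite (ip_conj hip) ip0l conjc0. Qed.

Lemma ipNr x y : ip x (- y) = - ip x y.
Proof. by rewrite -scaleN1r ipZr rmorphN1 mulN1r. Qed.

Lemma ipBr x y z : ip x (y - z) = ip x y - ip x z.
Proof. by rewrite ipDr ipNr. Qed.

Lemma ipxx x : ip x x = (hnorm x ^+ 2)%:C.
Proof.
rewrite /Defs.hnorm; move: (ip_ge0 hip x).
by case: (ip x x) => a b; rewrite lecE /= => /andP[/eqP -> a_ge0]; rewrite sqr_sqrtr.
Qed.

Lemma hnorm_ge0 x : 0 <= hnorm x.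
Proof. exact: sqrtr_ge0. Qed.

Lemma hnorm_eq0 x : hnorm x = 0 -> x = 0.
Proof. by move=> h; apply: (ip_eq0 hip); rewrite ipxx h expr0n. Qed.

Lemma hnorm0 : hnorm 0 = 0.
Proof. by rewrite /Defs.hnorm ip0l /= sqrtr0. Qed.

Lemma hnormZ a x : hnorm (a *: x) = Normc.normc a * hnorm x.
Proof.
apply/eqP; rewrite -(@eqrXn2 _ 2) ?hnorm_ge0 ?mulr_ge0 ?normc_ge0 ?hnorm_ge0 //.
rewrite -(inj_eq (@complexI _)) -ipxx ipZl ipZr mulrA exprMn rmorphM /= -ipxx.
by rewrite mulcJ_normc.
Qed.

Lemma hnormN x : hnorm (- x) = hnorm x.
Proof. by rewrite -scaleN1r hnormZ (normcN (1 : R[i])) Normc.normc1 mul1r. Qed.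

Lemma hnorm_distC x y : hnorm (x - y) = hnorm (y - x).
Proof. by rewrite -hnormN opprB. Qed.

Lemma cauchy_schwarz x y : Normc.normc (ip x y) <= hnorm x * hnorm y.
Proof.
have [y0|ny0] := eqVneq (hnorm y) 0.
  by rewrite (hnorm_eq0 y0) ip0r Normc.normc0 hnorm0 mulr0.
have n_gt0 : 0 < hnorm y by rewrite lt_def ny0 hnorm_ge0.
set z := ip x y; set n := hnorm y; set t := z / (n ^+ 2)%:C.
have proj : (hnorm (x - t *: y) ^+ 2)%:C =
    (hnorm x ^+ 2 - Normc.normc z ^+ 2 / n ^+ 2)%:C.
  have tJ : conjc t = conjc z / (n ^+ 2)%:C.
    by rewrite /t rmorphM fmorphV; congr (_ / _); exact: conjc_real.
  have zJ : (Normc.normc z ^+ 2 / n ^+ 2)%:C = z * conjc z / (n ^+ 2)%:C.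
    by rewrite mulcJ_normc rmorphM fmorphV.
  rewrite -ipxx ipBl !ipBr !ipZl !ipZr !ipxx -/n -/z (ip_conj hip x y) -/z tJ.
  by rewrite /t rmorphB /= zJ; field; rewrite (inj_eq (@complexI _)).
have : 0 <= hnorm x ^+ 2 - Normc.normc z ^+ 2 / n ^+ 2.
  by rewrite -ler0c -proj ler0c sqr_ge0.
rewrite subr_ge0 ler_pdivrMr ?exprn_gt0 // -exprMn.
by rewrite ler_pXn2r ?nnegrE ?mulr_ge0 ?normc_ge0 ?hnorm_ge0.
Qed.

Lemma ler_hnormD x y : hnorm (x + y) <= hnorm x + hnorm y.
Proof.
rewrite -(@ler_pXn2r _ 2) ?nnegrE ?addr_ge0 ?hnorm_ge0 //.
have expandC : (hnorm (x + y) ^+ 2)%:C =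
    (hnorm x ^+ 2 + hnorm y ^+ 2)%:C + 2%:R * (complex.Re (ip x y))%:C.
  by rewrite rmorphD /= -!ipxx ipDl !ipDr (ip_conj hip x y) -addcJ; ring.
have expand : hnorm (x + y) ^+ 2 =
    hnorm x ^+ 2 + hnorm y ^+ 2 + 2 * complex.Re (ip x y).
  by have := congr1 (@complex.Re R) expandC; rewrite /= => ->; ring.
rewrite expand sqrrD addrAC lerD2r lerD2l -[X in _ <= X]mulr_natl ler_pM2l ?ltr0n //.
exact: le_trans (Re_le_normc _) (cauchy_schwarz _ _).
Qed.

Lemma ler_hnorm_distD x y z : hnorm (x - z) <= hnorm (x - y) + hnorm (y - z).
Proof. by have := ler_hnormD (x - y) (y - z); rewrite addrA subrK. Qed.

Lemma hnorm_small_eq0 z : (forall eps, 0 < eps -> hnorm z < eps) -> z = 0.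
Proof.
move=> h; apply: hnorm_eq0; apply/eqP; rewrite eq_le hnorm_ge0 andbT.
by apply/ler_addgt0Pr => e /h /ltW; rewrite add0r.
Qed.

(* [converges_to u l] unfolds to [null_seq (fun n => hnorm (u n - l))], so the
   [null_seq] lemmas apply to convergence hypotheses directly. *)
Lemma converges_to_unique u l l' : converges_to u l -> converges_to u l' -> l = l'.
Proof.
move=> hl hl'; apply/eqP; rewrite -subr_eq0; apply/eqP/hnorm_small_eq0 => e e_gt0.
have [N HN] := null_seqD hl hl' e_gt0.
by apply: le_lt_trans (HN N (leqnn N)); rewrite (hnorm_distC (u N) l) ler_hnorm_distD.
Qed.

Lemma converges_to_dominated u l r : null_seq r ->
  (forall n, hnorm (u n - l) <= r n) -> converges_to u l.
Proof. by move=> r_null le_r; apply: null_seq_le r_null. Qed.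

Lemma converges_to_const x : converges_to (fun=> x) x.
Proof. by move=> e e_gt0; exists 0%N => n _; rewrite subrr hnorm0. Qed.

Lemma converges_to_shift u l : converges_to u l -> converges_to (fun n => u n.+1) l.
Proof. by move=> h e /h [N HN]; exists N => n /leqW /HN. Qed.

Lemma converges_toDZ a u l v m : converges_to u l -> converges_to v m ->
  converges_to (fun n => a *: u n + v n) (a *: l + m).
Proof.
move=> hu hv; apply: (@converges_to_dominated _ _
  (fun n => Normc.normc a * hnorm (u n - l) + hnorm (v n - m))).
  by apply: null_seqD => //; apply: null_seqZ => //; exact: normc_ge0.
move=> n; rewrite opprD addrACA -scalerBr.
by apply: le_trans (ler_hnormD _ _) _; rewrite hnormZ.
Qed.

Lemma converges_to_cauchy u l : converges_to u l -> cauchy_seq u.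
Proof.
move=> h e e_gt0; have [N HN] := h _ (divr_gt0 e_gt0 (ltr0n _ 2)).
exists N => m n hm hn; apply: le_lt_trans (ler_hnorm_distD _ l _) _.
by rewrite [e]splitr ltrD ?HN // hnorm_distC HN.
Qed.

Lemma converges_to_hnorm_le u l v m : converges_to u l -> converges_to v m ->
  (forall n, hnorm (u n) <= hnorm (v n)) -> hnorm l <= hnorm m.
Proof.
move=> hu hv le_uv; apply/ler_addgt0Pr => e e_gt0.
have [N HN] := null_seqD hu hv e_gt0; have := HN N (leqnn N); have := le_uv N.
have := ler_hnorm_distD l (u N) 0; have := ler_hnorm_distD (v N) m 0.
rewrite !subr0 (hnorm_distC l); lra.
Qed.

Section LinearOperator.
Variable T : H -> H.
Hypothesis T_lin : linear_op T.

Lemma linear_op0 : T 0 = 0.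
Proof.
have := T_lin 1 0 0; rewrite !scale1r addr0 => T00.
by apply: (@addrI _ (T 0)); rewrite -T00 addr0.
Qed.

Lemma linear_opD x y : T (x + y) = T x + T y.
Proof. by have := T_lin 1 x y; rewrite !scale1r. Qed.

Lemma linear_opZ a x : T (a *: x) = a *: T x.
Proof. by have := T_lin a x 0; rewrite !addr0 linear_op0 addr0. Qed.

Lemma linear_opB x y : T (x - y) = T x - T y.
Proof. by rewrite -scaleN1r addrC T_lin scaleN1r addrC. Qed.

End LinearOperator.

Lemma linear_op_comp T1 T2 : linear_op T1 -> linear_op T2 -> linear_op (T1 \o T2).
Proof. by move=> T1_lin T2_lin a x y /=; rewrite T2_lin T1_lin. Qed.

Lemma bounded_op_nonneg T : bounded_op ip T ->
  exists M, 0 <= M /\ forall x, hnorm (T x) <= M * hnorm x.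
Proof.
move=> [M hM]; exists `|M|; split=> // x.
by apply: le_trans (hM x) _; rewrite ler_wpM2r ?hnorm_ge0 ?ler_norm.
Qed.

Lemma bounded_op_comp T1 T2 : bounded_op ip T1 -> bounded_op ip T2 ->
  bounded_op ip (T1 \o T2).
Proof.
move=> /bounded_op_nonneg [M1 [M1_ge0 h1]] /bounded_op_nonneg [M2 [_ h2]].
exists (M1 * M2) => x; apply: le_trans (h1 _) _.
by rewrite -mulrA ler_wpM2l.
Qed.

Lemma bounded_invertible_comp T1 T2 : bounded_invertible ip T1 ->
  bounded_invertible ip T2 -> bounded_invertible ip (T1 \o T2).
Proof.
move=> [T1_lin [T1_bd [S1 [S1_lin [S1_bd [T1K S1K]]]]]].
move=> [T2_lin [T2_bd [S2 [S2_lin [S2_bd [T2K S2K]]]]]].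
split; [exact: linear_op_comp | split; first exact: bounded_op_comp].
exists (S2 \o S1); split; [exact: linear_op_comp | split; first exact: bounded_op_comp].
by split=> x /=; rewrite ?T1K ?T2K ?S2K ?S1K.
Qed.

Lemma bounded_invertible_id : bounded_invertible ip id.
Proof.
have id_bd : bounded_op ip id by exists 1 => x; rewrite mul1r.
by split=> [a x y //|]; split=> //; exists id.
Qed.

Lemma bounded_invertible_scale c : c != 0 -> bounded_invertible ip ( *:%R c).
Proof.
move=> c_neq0; have scale_lin b : linear_op ( *:%R b).
  by move=> a x y; rewrite scalerDr !scalerA mulrC.
split=> //; split; first by exists (Normc.normc c) => x; rewrite hnormZ.
exists ( *:%R c^-1); split=> //; split.
  by exists (Normc.normc c^-1) => x; rewrite hnormZ.
by split=> x; rewrite scalerA ?mulVf ?mulfV // scale1r.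
Qed.

Lemma bounded_invertible_of_bounds T M c : linear_op T ->
  (forall x, hnorm (T x) <= M * hnorm x) ->
  0 < c -> (forall x, c * hnorm x <= hnorm (T x)) ->
  (forall y, exists x, T x = y) -> bounded_invertible ip T.
Proof.
move=> T_lin T_le c_gt0 T_ge T_surj.
have T_inj : injective T.
  move=> x y Txy; apply/eqP; rewrite -subr_eq0; apply/eqP/hnorm_eq0/eqP.
  rewrite eq_le hnorm_ge0 andbT -(pmulr_rle0 _ c_gt0).
  by apply: le_trans (T_ge _) _; rewrite linear_opB // Txy subrr hnorm0.
pose S y := proj1_sig (cid (T_surj y)).
have SK : cancel S T by move=> y; exact: proj2_sig (cid (T_surj y)).
have TK : cancel T S by move=> x; apply: T_inj; rewrite SK.
split=> //; split; first by exists M.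
exists S; split; first by move=> a x y; apply: T_inj; rewrite T_lin !SK.
split=> //; exists c^-1 => y.
by rewrite ler_pdivlMl // -{2}(SK y).
Qed.

Lemma bounded_invertible_lower_bound T : bounded_invertible ip T ->
  exists K, 0 <= K /\ forall x, hnorm x <= K * hnorm (T x).
Proof.
move=> [_ [_ [S [_ [/bounded_op_nonneg [K [K_ge0 S_le]] [TK _]]]]]].
by exists K; split=> // x; rewrite -{1}(TK x) S_le.
Qed.

Hypothesis H_complete : forall u, cauchy_seq u -> exists l, converges_to u l.

Section Neumann.
Variables (D : H -> H) (q : R).
Hypotheses (D_lin : linear_op D) (q_ge0 : 0 <= q) (q_lt1 : q < 1).
Hypothesis D_le : forall x, hnorm (D x) <= q * hnorm x.
Variable y : H.

(* The partial sums of the Neumann series [\sum_k (-D)^k y], i.e. the Picard iterates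
   of the contraction [z |-> y - D z]. *)
Definition neumann_iter n := iter n (fun z => y - D z) 0.

Lemma hnorm_neumann_iter n : hnorm (neumann_iter n) <= hnorm y / (1 - q).
Proof.
have q1_gt0 : 0 < 1 - q by rewrite subr_gt0.
have fixed : hnorm y + q * (hnorm y / (1 - q)) = hnorm y / (1 - q).
  by field; rewrite subr_eq0 gt_eqF.
elim: n => [|n IH]; first by rewrite hnorm0 divr_ge0 ?hnorm_ge0 ?ltW.
rewrite /neumann_iter /= -/(neumann_iter n).
apply: le_trans (ler_hnormD _ _) _; rewrite hnormN.
have := ler_wpM2l q_ge0 IH; have := D_le (neumann_iter n); lra.
Qed.

Lemma hnorm_neumann_iterB k n :
  hnorm (neumann_iter (n + k) - neumann_iter n) <= q ^+ n * (hnorm y / (1 - q)).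
Proof.
elim: n => [|n IH]; first by rewrite add0n expr0 mul1r subr0 hnorm_neumann_iter.
rewrite addSn /= opprB addrC addrA subrK -linear_opB // exprS -mulrA.
by apply: le_trans (D_le _) _; rewrite hnorm_distC ler_wpM2l.
Qed.

Lemma neumann_iter_cauchy : cauchy_seq neumann_iter.
Proof.
move=> e e_gt0.
have c_ge0 : 0 <= hnorm y / (1 - q) by rewrite divr_ge0 ?hnorm_ge0 // subr_ge0 ltW.
have [N HN] := null_seqZ c_ge0 (null_seq_expr q_ge0 q_lt1) e_gt0.
suff dist_lt m n : (N <= n <= m)%N -> hnorm (neumann_iter m - neumann_iter n) < e.
  exists N => m n hm hn; have [le_nm|/ltnW le_mn] := leqP n m.
    by rewrite dist_lt ?hn.
  by rewrite hnorm_distC dist_lt ?hm.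
move=> /andP[hn /subnKC <-]; apply: le_lt_trans (hnorm_neumann_iterB _ _) _.
by rewrite mulrC HN.
Qed.

Lemma neumann_surjective : exists x, x + D x = y.
Proof.
have [x x_lim] := H_complete neumann_iter_cauchy; exists x.
have Dx_lim : converges_to (fun n => D (neumann_iter n)) (D x).
  apply: (@converges_to_dominated _ _ (fun n => q * hnorm (neumann_iter n - x))).
    exact: null_seqZ.
  by move=> n; rewrite -linear_opB.
have x_eq : x = (-1) *: D x + y.
  apply: converges_to_unique (converges_to_shift x_lim) _.
  have := converges_toDZ (-1) Dx_lim (converges_to_const y).
  by congr converges_to; apply: funext => n /=; rewrite scaleN1r addrC.
by rewrite {1}x_eq scaleN1r addrAC addNr add0r.
Qed.

End Neumann.

Lemma bounded_invertible_neumann D q : linear_op D -> 0 <= q -> q < 1 ->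
  (forall x, hnorm (D x) <= q * hnorm x) -> bounded_invertible ip (fun x => x + D x).
Proof.
move=> D_lin q_ge0 q_lt1 D_le.
apply: (@bounded_invertible_of_bounds _ (1 + q) (1 - q)).
- by move=> a x y; rewrite D_lin scalerDr addrACA.
- by move=> x; apply: le_trans (ler_hnormD _ _) _; rewrite mulrDl mul1r lerD2l.
- by rewrite subr_gt0.
- move=> x; have := ler_hnorm_distD x (x + D x) 0.
  rewrite !subr0 opprD addrA subrr add0r hnormN; have := D_le x; nra.
- exact: (neumann_surjective D_lin q_ge0 q_lt1 D_le).
Qed.

Section Families.
Variable I : Type.
Implicit Types (s t : seq (C * I)) (e f g h : I -> H).

Definition lincomb s f : H := \sum_(p <- s) p.1 *: f p.2.

Definition scale_coefs a s := [seq (a * p.1, p.2) | p <- s].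

Lemma lincomb1 f i : lincomb [:: (1, i)] f = f i.
Proof. by rewrite /lincomb big_seq1 scale1r. Qed.

Lemma lincomb_cat s t f : lincomb (s ++ t) f = lincomb s f + lincomb t f.
Proof. exact: big_cat. Qed.

Lemma lincomb_scale a s f : lincomb (scale_coefs a s) f = a *: lincomb s f.
Proof.
by rewrite /lincomb big_map scaler_sumr; apply: eq_bigr => p _; rewrite scalerA.
Qed.

Lemma lincombB s t f : lincomb s f - lincomb t f = lincomb (s ++ scale_coefs (-1) t) f.
Proof. by rewrite lincomb_cat lincomb_scale scaleN1r. Qed.

Lemma linear_op_lincomb T s f : linear_op T -> T (lincomb s f) = lincomb s (T \o f).
Proof.
move=> T_lin; elim: s => [|p s IH]; first by rewrite /lincomb !big_nil linear_op0.
by rewrite /lincomb !big_cons linear_opD // linear_opZ // -/(lincomb _ _) IH.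
Qed.

Lemma ip_lincombl s f y : ip (lincomb s f) y = \sum_(p <- s) p.1 * ip (f p.2) y.
Proof.
elim: s => [|p s IH]; first by rewrite /lincomb !big_nil ip0l.
by rewrite /lincomb in IH *; rewrite !big_cons ipDl ipZl IH.
Qed.

Lemma ip_lincombr s f y : ip y (lincomb s f) = \sum_(p <- s) conjc p.1 * ip y (f p.2).
Proof.
elim: s => [|p s IH]; first by rewrite /lincomb !big_nil ip0r.
by rewrite /lincomb in IH *; rewrite !big_cons ipDr ipZr IH.
Qed.

Lemma hnorm_lincomb_orthonormal e f s : Defs.orthonormal ip e -> Defs.orthonormal ip f ->
  hnorm (lincomb s e) = hnorm (lincomb s f).
Proof.
move=> e_orth f_orth; rewrite /Defs.hnorm !ip_lincombl.
congr (Num.sqrt (complex.Re _)); apply: eq_bigr => p _; rewrite !ip_lincombr.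
by congr (_ * _); apply: eq_bigr => r _; rewrite e_orth f_orth.
Qed.

Lemma hnorm_lincombB_orthonormal e f s t :
  Defs.orthonormal ip e -> Defs.orthonormal ip f ->
  hnorm (lincomb s e - lincomb t e) = hnorm (lincomb s f - lincomb t f).
Proof.
by move=> e_orth f_orth; rewrite !lincombB (hnorm_lincomb_orthonormal _ e_orth f_orth).
Qed.

Section IsometryExtension.
Variables e f : I -> H.
Hypotheses (e_orth : Defs.orthonormal ip e) (e_total : complete_family ip e).
Hypothesis f_orth : Defs.orthonormal ip f.

Lemma exists_basis_approx x n : exists s, hnorm (x - lincomb s e) < n.+1%:R^-1.
Proof.
have inv_gt0 : 0 < n.+1%:R^-1 :> R by rewrite invr_gt0.
have [y [[s ->] hy]] := e_total x inv_gt0.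
by exists s.
Qed.

Definition basis_approx x n := proj1_sig (cid (exists_basis_approx x n)).

Lemma basis_approx_conv x : converges_to (fun n => lincomb (basis_approx x n) e) x.
Proof.
apply: (converges_to_dominated (@null_seq_invS R)) => n; rewrite hnorm_distC.
exact: ltW (proj2_sig (cid (exists_basis_approx x n))).
Qed.

(* The coefficients approximating [x] on [e] give a Cauchy sequence on [f], as [e]
   and [f] have the same Gram matrix. *)
Lemma exists_basis_transfer x :
  exists l, converges_to (fun n => lincomb (basis_approx x n) f) l.
Proof.
apply: H_complete => eps /(converges_to_cauchy (basis_approx_conv x)) [N HN].
by exists N => m n hm hn; rewrite -(hnorm_lincombB_orthonormal _ _ e_orth f_orth) HN.
Qed.

Definition basis_transfer x := proj1_sig (cid (exists_basis_transfer x)).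

Lemma basis_transfer_conv x :
  converges_to (fun n => lincomb (basis_approx x n) f) (basis_transfer x).
Proof. exact: proj2_sig (cid (exists_basis_transfer x)). Qed.

Lemma basis_transfer_lim x (cs : nat -> seq (C * I)) :
  converges_to (fun n => lincomb (cs n) e) x ->
  converges_to (fun n => lincomb (cs n) f) (basis_transfer x).
Proof.
move=> cs_lim; apply: (@converges_to_dominated _ _ (fun n =>
  hnorm (lincomb (cs n) e - x) + hnorm (lincomb (basis_approx x n) e - x)
  + hnorm (lincomb (basis_approx x n) f - basis_transfer x))).
  apply: null_seqD; last exact: basis_transfer_conv.
  by apply: null_seqD => //; exact: basis_approx_conv.
move=> n; apply: le_trans (ler_hnorm_distD _ (lincomb (basis_approx x n) f) _) _.
rewrite lerD2r -(hnorm_lincombB_orthonormal _ _ e_orth f_orth).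
by apply: le_trans (ler_hnorm_distD _ x _) _; rewrite (hnorm_distC x).
Qed.

Lemma basis_transfer_e i : basis_transfer (e i) = f i.
Proof.
have := basis_transfer_lim (x := e i) (cs := fun=> [:: (1, i)]).
rewrite !lincomb1 => /(_ (converges_to_const _)) lim_f.
exact: converges_to_unique lim_f (converges_to_const _).
Qed.

Lemma basis_transfer_linear : linear_op basis_transfer.
Proof.
move=> a x y; set cs := fun n => scale_coefs a (basis_approx x n) ++ basis_approx y n.
have lin_cs g : (fun n => lincomb (cs n) g) =
    (fun n => a *: lincomb (basis_approx x n) g + lincomb (basis_approx y n) g).
  by apply: funext => n; rewrite /cs lincomb_cat lincomb_scale.
apply: (converges_to_unique (basis_transfer_lim (cs := cs) _)).
  by rewrite lin_cs; apply: converges_toDZ; exact: basis_approx_conv.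
by rewrite lin_cs; apply: converges_toDZ; exact: basis_transfer_conv.
Qed.

Lemma hnorm_basis_transfer x : hnorm (basis_transfer x) = hnorm x.
Proof.
have eq_n n : hnorm (lincomb (basis_approx x n) f) = hnorm (lincomb (basis_approx x n) e).
  exact: hnorm_lincomb_orthonormal.
have le_Wx := converges_to_hnorm_le (basis_transfer_conv x) (basis_approx_conv x).
have le_xW := converges_to_hnorm_le (basis_approx_conv x) (basis_transfer_conv x).
by apply/eqP; rewrite eq_le le_Wx ?le_xW // => n; rewrite eq_n.
Qed.

End IsometryExtension.

Lemma isometry_of_orthonormal e f : orthonormal_basis ip e -> Defs.orthonormal ip f ->
  exists W, [/\ linear_op W, forall x, hnorm (W x) = hnorm x & forall i, W (e i) = f i].
Proof.
move=> [e_orth e_total] f_orth; exists (basis_transfer e_orth e_total f_orth).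
split; [exact: basis_transfer_linear | exact: hnorm_basis_transfer |].
exact: basis_transfer_e.
Qed.

Lemma complete_family_image e g T : complete_family ip e ->
  bounded_invertible ip T -> (forall i, T (e i) = g i) -> complete_family ip g.
Proof.
move=> e_total [T_lin [/bounded_op_nonneg [M [M_ge0 T_le]] [S [_ [_ [_ SK]]]]]] Te.
move=> x eps eps_gt0.
have M1_gt0 : 0 < M + 1 by rewrite ltr_wpDl.
have [_ [[s ->] close]] := e_total (S x) _ (divr_gt0 eps_gt0 M1_gt0).
exists (lincomb s g); split; first by exists s.
have -> : lincomb s g = T (lincomb s e).
  by rewrite linear_op_lincomb //; apply: eq_bigr => p _ /=; rewrite Te.
rewrite -{1}(SK x) -linear_opB //; apply: le_lt_trans (T_le _) _.
apply: le_lt_trans (ler_wpM2l M_ge0 (ltW close)) _.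
by rewrite mulrA ltr_pdivrMr //; nra.
Qed.

Lemma riesz_basis_complete g : riesz_basis ip g -> complete_family ip g.
Proof. by move=> [e [[_ e_total] [T [T_inv Te]]]]; apply: complete_family_image Te. Qed.

Lemma riesz_basis_image f g T : riesz_basis ip f -> bounded_invertible ip T ->
  (forall i, T (f i) = g i) -> riesz_basis ip g.
Proof.
move=> [e [e_basis [T0 [T0_inv T0e]]]] T_inv Tf; exists e; split=> //.
by exists (T \o T0); split=> [|i /=]; [exact: bounded_invertible_comp | rewrite T0e Tf].
Qed.

Lemma riesz_basis_perturb e g h T A (K M : R) (lam : C) :
  orthonormal_basis ip e -> bounded_invertible ip T ->
  (forall x, hnorm x <= K * hnorm (T x)) -> (forall i, T (e i) = g i) ->
  linear_op A -> (forall x, hnorm (A x) <= M * hnorm x) -> (forall i, A (e i) = h i) ->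
  0 <= K -> 0 <= M -> Normc.normc lam * (K * M) < 1 ->
  riesz_basis ip (fun i => g i + lam *: h i).
Proof.
move=> e_basis T_inv T_ge Te A_lin A_le Ae K_ge0 M_ge0 small.
have [T_lin [_ [S [S_lin [_ [_ SK]]]]]] := T_inv.
pose D x := lam *: S (A x).
have D_lin : linear_op D by move=> a x y; rewrite /D A_lin S_lin scalerDr !scalerA mulrC.
have D_le x : hnorm (D x) <= Normc.normc lam * (K * M) * hnorm x.
  rewrite /D hnormZ -!mulrA ler_wpM2l ?normc_ge0 //.
  by apply: le_trans (T_ge _) _; rewrite SK ler_wpM2l.
have q_ge0 : 0 <= Normc.normc lam * (K * M) by rewrite !mulr_ge0 ?normc_ge0.
have D_inv := bounded_invertible_neumann D_lin q_ge0 small D_le.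
exists e; split=> //; exists (T \o (fun x => x + D x)).
split=> [|i /=]; first exact: bounded_invertible_comp.
by rewrite /D Ae linear_opD // linear_opZ // SK Te.
Qed.

End Families.

Section UnitarySystem.
Variable US : set (H -> H).
Hypothesis US_unitary : unitary_system ip US.
Local Notation orbit := (@uorbit R H US).
Local Notation riesz_vector := (riesz_vector ip US).

Lemma unitary_system_linear U : US U -> linear_op U.
Proof. by move=> US_U; case: (US_unitary.1 U US_U). Qed.

Lemma uorbitZ c psi U : orbit (c *: psi) U = c *: orbit psi U.
Proof.
by case: U => U US_U; rewrite /uorbit /= (linear_opZ (unitary_system_linear US_U)).
Qed.

Lemma uorbitD psi1 psi2 lam :
  orbit (psi1 + lam *: psi2) = (fun U => orbit psi1 U + lam *: orbit psi2 U).
Proof.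
apply: funext => -[U US_U].
by rewrite -uorbitZ /uorbit /= (linear_opD (unitary_system_linear US_U)).
Qed.

Lemma riesz_vectorP psi : riesz_vector psi <-> riesz_basis ip (orbit psi).
Proof. by split=> [[] //|rb]; split=> //; exact: riesz_basis_complete. Qed.

Lemma riesz_vectorZ c psi : c != 0 -> riesz_vector psi -> riesz_vector (c *: psi).
Proof.
move=> c_neq0 /riesz_vectorP rb; apply/riesz_vectorP.
by apply: riesz_basis_image rb (bounded_invertible_scale c_neq0) _ => U; rewrite uorbitZ.
Qed.

Lemma riesz_vector_large psi1 psi2 (a : R) : 0 < a ->
  (forall mu : C, Normc.normc mu < a -> riesz_vector (psi2 + mu *: psi1)) ->
  forall lam : C, a^-1 < Normc.normc lam -> riesz_vector (psi1 + lam *: psi2).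
Proof.
move=> a_gt0 small lam lt_lam.
have lam_gt0 : 0 < Normc.normc lam by apply: lt_trans lt_lam; rewrite invr_gt0.
have lam_neq0 : lam != 0 by rewrite -normc_gt0.
have -> : psi1 + lam *: psi2 = lam *: (psi2 + lam^-1 *: psi1).
  by rewrite scalerDr scalerA mulfV // scale1r addrC.
apply: riesz_vectorZ lam_neq0 (small _ _).
by rewrite Normc.normcV -(invrK a) ltf_pV2 ?posrE ?invr_gt0.
Qed.

Lemma wandering_riesz_small psi1 psi2 (lam : C) :
  wandering ip US psi1 -> wandering ip US psi2 -> Normc.normc lam < 1 ->
  riesz_vector (psi1 + lam *: psi2).
Proof.
move=> [e_orth e_total] [f_orth _] small; apply/riesz_vectorP; rewrite uorbitD.
have [W [W_lin W_iso We]] := isometry_of_orthonormal (conj e_orth e_total) f_orth.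
apply: (riesz_basis_perturb (K := 1) (M := 1) (conj e_orth e_total)
  bounded_invertible_id _ _ W_lin _ We) => //.
- by move=> x; rewrite mul1r.
- by move=> x; rewrite mul1r W_iso.
- by rewrite !mulr1.
Qed.

Lemma riesz_vector_small psi1 psi2 : riesz_vector psi1 -> riesz_vector psi2 ->
  exists a : R, 0 < a /\
    forall lam : C, Normc.normc lam < a -> riesz_vector (psi1 + lam *: psi2).
Proof.
move=> [_ [e [e_basis [T1 [T1_inv T1e]]]]] [_ [f [[f_orth _] [T2 [T2_inv T2f]]]]].
have [K [K_ge0 T1_ge]] := bounded_invertible_lower_bound T1_inv.
have [M [M_ge0 T2_le]] := bounded_op_nonneg T2_inv.2.1.
have [W [W_lin W_iso We]] := isometry_of_orthonormal e_basis f_orth.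
have KM1_gt0 : 0 < K * M + 1 by rewrite ltr_wpDl ?mulr_ge0.
exists (K * M + 1)^-1; split=> [|lam small]; first by rewrite invr_gt0.
apply/riesz_vectorP; rewrite uorbitD.
apply: (riesz_basis_perturb (A := T2 \o W) (M := M) e_basis T1_inv T1_ge T1e) => //.
- exact: linear_op_comp T2_inv.1 W_lin.
- by move=> x /=; rewrite -(W_iso x) T2_le.
- by move=> i /=; rewrite We T2f.
- move: small; rewrite -[_^-1]mul1r ltr_pdivlMr //; apply: le_lt_trans.
  by rewrite ler_wpM2l ?normc_ge0 ?lerDl.
Qed.

End UnitarySystem.

End InnerProductSpace.

Theorem proposition3 (R : realType) (H : lmodType R[i]) (ip : H -> H -> R[i])
  (hH : hilbert_space ip) (hsep : separable ip)
  (US : set (H -> H)) (hUS : unitary_system ip US) :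
  (forall psi1 psi2 : H,
     wandering ip US psi1 -> wandering ip US psi2 ->
     forall lam : R[i], Normc.normc lam != 1 ->
       riesz_vector ip US (psi1 + lam *: psi2)) /\
  (forall psi1 psi2 : H,
     riesz_vector ip US psi1 -> riesz_vector ip US psi2 ->
     exists a b : R, 0 < a /\ a < b /\
       forall lam : R[i], Normc.normc lam < a \/ b < Normc.normc lam ->
         riesz_vector ip US (psi1 + lam *: psi2)).
Proof.
have [hip H_complete] := hH.
split=> [psi1 psi2 w1 w2 lam /lt_total/orP[lt1 | gt1] | psi1 psi2 r1 r2].
- exact: wandering_riesz_small.
- apply: (riesz_vector_large hip hUS ltr01); last by rewrite invr1.
  by move=> mu; apply: wandering_riesz_small.
have [a [a_gt0 small_a]] := riesz_vector_small hip H_complete hUS r1 r2.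
have [c [c_gt0 small_c]] := riesz_vector_small hip H_complete hUS r2 r1.
exists a, (a + c^-1); split=> //; split; first by rewrite ltrDl invr_gt0.
move=> lam [lt_a | gt_b]; first exact: small_a.
apply: (riesz_vector_large hip hUS c_gt0 small_c).
by apply: lt_trans gt_b; rewrite ltrDr.
Qed.
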